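(* Let $G$ be a two-player stage game and let $I=\{(i,j)\in A_1\times A_2: u_2(i,j)=\max_{j'\in A_2}u_2(i,j')\}$. Suppose that (1) $|V_1^{m,m}|>1$ and $|V_2^{m,m}|=1$; (2) there do not exist $\hat a_1\in A_1$, $\hat\sigma_2\in\Delta A_2$, $a_1'\in A_1$ with $u_1(\hat a_1,\hat\sigma_2)<u_1(a_1',\hat\sigma_2)$ and $\hat\sigma_2$ a best response to $\hat a_1$; (3) there do not exist $a_1\in A_1$ and $a_2,a_2'\in A_2$ with $a_2\ne a_2'$ such that both $a_2$ and $a_2'$ are best responses to $a_1$. Then: (a) $I\subseteq\mathrm{Nash}^{m,m}(G)$; (b) for each $i\in A_1$ there is a unique $j\in A_2$ with $(i,j)\in I$; (c) there exists $b\in\mathbb{R}$ such that $u_2(i,j)=b$ for all $(i,j)\in I$ and $u_2(i',j')<b$ for all $(i',j')\in(A_1\times A_2)\setminus I$; (d) there exist $(i,j),(i',j')\in I$ with $u_1(i,j)\ne u_1(i',j')$, $i\ne i'$ and $j\ne j'$.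
   Context: A two-player stage game $G$ consists of finite nonempty action sets $A_1,A_2$ and payoff functions $u_1,u_2:A_1\times A_2\to\mathbb{R}$, extended to mixed strategies $\sigma_i\in\Delta A_i$ by expectation. A (mixed) strategy is a best response to the opponent's strategy if it maximizes expected payoff against it. $\mathrm{Nash}^{m,m}(G)$ is the set of mixed-strategy Nash equilibria of $G$ (pure profiles viewed as degenerate mixed profiles), and $V_i^{m,m}=\{u_i(\sigma):\sigma\in\mathrm{Nash}^{m,m}(G)\}$. *)

From HB Require Import structures.
From mathcomp Require Import all_boot all_order all_algebra.
Set Implicit Arguments. Unset Strict Implicit. Unset Printing Implicit Defensive.
Import Order.TTheory GRing.Theory Num.Theory.
Local Open Scope ring_scope.

Section Games.
Variables (R : realFieldType) (A1 A2 : finType).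

Definition mixed (A : finType) (s : {ffun A -> R}) : Prop :=
  (forall a, 0 <= s a) /\ \sum_(a : A) s a = 1.

Definition pure (A : finType) (a : A) : {ffun A -> R} := [ffun x => (x == a)%:R].

Definition expay (u : A1 -> A2 -> R) (s1 : {ffun A1 -> R}) (s2 : {ffun A2 -> R}) : R :=
  \sum_(a1 : A1) \sum_(a2 : A2) s1 a1 * s2 a2 * u a1 a2.

Definition best_resp1 (u1 : A1 -> A2 -> R) (s1 : {ffun A1 -> R}) (s2 : {ffun A2 -> R}) : Prop :=
  mixed s1 /\ forall t1, mixed t1 -> expay u1 t1 s2 <= expay u1 s1 s2.

Definition best_resp2 (u2 : A1 -> A2 -> R) (s1 : {ffun A1 -> R}) (s2 : {ffun A2 -> R}) : Prop :=
  mixed s2 /\ forall t2, mixed t2 -> expay u2 s1 t2 <= expay u2 s1 s2.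

Definition nash (u1 u2 : A1 -> A2 -> R) (s1 : {ffun A1 -> R}) (s2 : {ffun A2 -> R}) : Prop :=
  mixed s1 /\ mixed s2 /\ best_resp1 u1 s1 s2 /\ best_resp2 u2 s1 s2.

Definition Iset (u2 : A1 -> A2 -> R) (i : A1) (j : A2) : Prop :=
  forall j', u2 i j' <= u2 i j.

End Games.

From mathcomp Require Import all_boot all_order all_algebra.
Import Order.TTheory GRing.Theory Num.Theory.
Local Open Scope ring_scope.

(* Hypothesis (3) says every pure action of player 1 has a
   unique pure best reply, and hypothesis (2) says that against a best reply
   of player 2 player 1 never wants to deviate; together they make every
   profile (i, j) of I a pure Nash equilibrium, which gives (a) and (b).
   Since player 2 earns the same value v in every equilibrium, u2 i j = v on
   I and u2 <= v everywhere, which gives (c).  For (d), an arbitrary mixed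
   equilibrium (s1, s2) has player-2 payoff v = max u2, so every profile in
   its support lies in I; by uniqueness of best replies s2 is then pure and
   the equilibrium's player-1 payoff equals u1 on some profile of I.  Two
   equilibria with different player-1 payoffs thus yield two profiles of I
   with different u1; they differ in the row (uniqueness of best replies)
   and in the column (two best replies of player 1 to the same column earn
   the same payoff). *)

Set Implicit Arguments.
Unset Strict Implicit.

Section ExpectedPayoffs.
Variables (R : realFieldType) (A1 A2 : finType).
Implicit Types (u : A1 -> A2 -> R).

Lemma expay_pureL u i (s2 : {ffun A2 -> R}) :
  expay u (pure R i) s2 = \sum_a2 s2 a2 * u i a2.
Proof.
rewrite /expay (bigD1 i) //= [X in _ + X]big1 ?addr0.
  by apply: eq_bigr => a _; rewrite ffunE eqxx mul1r.
by move=> a /negbTE nai; apply: big1 => b _; rewrite ffunE nai !mul0r.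
Qed.

Lemma expay_mixL u (t1 : {ffun A1 -> R}) s2 :
  expay u t1 s2 = \sum_a1 t1 a1 * expay u (pure R a1) s2.
Proof.
rewrite {1}/expay; apply: eq_bigr => a _; rewrite expay_pureL mulr_sumr.
by apply: eq_bigr => b _; rewrite mulrA.
Qed.

Lemma expay_pure u i j : expay u (pure R i) (pure R j) = u i j.
Proof.
rewrite expay_pureL (bigD1 j) //= big1 ?addr0; first by rewrite ffunE eqxx mul1r.
by move=> b /negbTE nb; rewrite ffunE nb mul0r.
Qed.

Lemma mixed_avg_const (s1 : {ffun A1 -> R}) (s2 : {ffun A2 -> R}) (v : R) :
  mixed s1 -> mixed s2 -> \sum_i \sum_j s1 i * s2 j * v = v.
Proof.
move=> [_ s1_1] [_ s2_1].
under eq_bigr => i _ do rewrite -mulr_suml -mulr_sumr s2_1 mulr1.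
by rewrite -mulr_suml s1_1 mul1r.
Qed.

Lemma avg_at_max_support u (s1 : {ffun A1 -> R}) (s2 : {ffun A2 -> R}) v :
  mixed s1 -> mixed s2 -> (forall i j, u i j <= v) -> expay u s1 s2 = v ->
  forall i j, 0 < s1 i -> 0 < s2 j -> u i j = v.
Proof.
move=> ms1 ms2 ub avg i j p1 p2.
have gap_ge0 k l : 0 <= s1 k * s2 l * (v - u k l).
  by rewrite !mulr_ge0 ?ms1.1 ?ms2.1 // subr_ge0.
have sum0 : \sum_k \sum_l s1 k * s2 l * (v - u k l) = 0.
  transitivity (\sum_k \sum_l s1 k * s2 l * v - expay u s1 s2); last first.
    by rewrite mixed_avg_const // avg subrr.
  rewrite /expay -sumrB; apply: eq_bigr => k _; rewrite -sumrB.
  by apply: eq_bigr => l _; rewrite mulrBr.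
have row0 : \sum_l s1 i * s2 l * (v - u i l) = 0.
  by apply: (psumr_eq0P _ sum0) => // k _; apply: sumr_ge0.
have /eqP := psumr_eq0P (fun l _ => gap_ge0 i l) row0 (i := j) isT.
by rewrite mulf_eq0 (gt_eqF (mulr_gt0 p1 p2)) /= subr_eq0 => /eqP <-.
Qed.

End ExpectedPayoffs.

Section MixedStrategies.
Variables (R : realFieldType) (A : finType).
Implicit Types (s : {ffun A -> R}).

Lemma mixed_pure (a : A) : mixed (pure R a).
Proof.
split => [x|]; first by rewrite ffunE ler0n.
rewrite (bigD1 a) //= ffunE eqxx big1 ?addr0 // => b /negbTE nb.
by rewrite ffunE nb.
Qed.

Lemma mixed_avg_le s (x : A -> R) M :
  mixed s -> (forall a, x a <= M) -> \sum_a s a * x a <= M.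
Proof.
case=> s0 s1 xM; apply: (@le_trans _ _ (\sum_a s a * M)).
  by apply: ler_sum => a _; apply: ler_wpM2l.
by rewrite -mulr_suml s1 mul1r.
Qed.

Lemma mixed_support s : mixed s -> exists a, 0 < s a.
Proof.
move=> [s_ge0 s_1]; case: (pickP (fun a => 0 < s a)) => [a pa | none].
  by exists a.
have : \sum_a s a = 0.
  by apply: big1 => a _; have := s_ge0 a; rewrite le_eqVlt none orbF => /eqP <-.
by rewrite s_1 => /eqP; rewrite oner_eq0.
Qed.

Lemma mixed_single_support s a0 :
  mixed s -> (forall a, 0 < s a -> a = a0) -> s = pure R a0.
Proof.
move=> [s_ge0 s_1] supp.
have off a : a != a0 -> s a = 0.
  move=> na; have := s_ge0 a; rewrite le_eqVlt => /orP[/eqP <- // | pa].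
  by rewrite (supp _ pa) eqxx in na.
apply/ffunP => a; rewrite ffunE; case: eqP => [-> | /eqP na]; last exact: off.
by rewrite (bigD1 a0) //= big1 ?addr0 in s_1 => // b /off.
Qed.

End MixedStrategies.
Arguments mixed_pure {R A} a.

Section BestResponses.
Variables (R : realFieldType) (A1 A2 : finType).
Implicit Types (u : A1 -> A2 -> R).

Lemma best_resp2_pure u i j : best_resp2 u (pure R i) (pure R j) <-> Iset u i j.
Proof.
split.
  by case=> _ br j'; have := br _ (mixed_pure j'); rewrite !expay_pure.
move=> Iij; split; first exact: mixed_pure.
by move=> t2 mt2; rewrite expay_pureL expay_pure; exact: mixed_avg_le.
Qed.

Lemma best_resp1_pure u i s2 :
  (forall a, expay u (pure R a) s2 <= expay u (pure R i) s2) ->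
  best_resp1 u (pure R i) s2.
Proof.
move=> dev; split; first exact: mixed_pure.
by move=> t1 mt1; rewrite (expay_mixL u t1); exact: mixed_avg_le.
Qed.

Lemma Iset_exists u (a2 : A2) i : exists j, Iset u i j.
Proof.
case: (@arg_maxP _ _ _ a2 predT (u i) isT) => j _ jmax.
by exists j => j'; apply: jmax.
Qed.

Lemma nash_pure_same_column u1 u2 i i' j :
  nash u1 u2 (pure R i) (pure R j) -> nash u1 u2 (pure R i') (pure R j) ->
  u1 i j = u1 i' j.
Proof.
move=> [_ [_ [[_ br] _]]] [_ [_ [[_ br'] _]]].
have := br _ (mixed_pure i'); have := br' _ (mixed_pure i).
by rewrite !expay_pure => le1 le2; apply: le_anti; rewrite le1 le2.
Qed.

End BestResponses.

Section Game.
Variables (R : realFieldType) (A1 A2 : finType) (u1 u2 : A1 -> A2 -> R).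

Hypothesis no_deviation :
  ~ (exists (ha1 : A1) (hs2 : {ffun A2 -> R}) (a1' : A1),
        expay u1 (pure R ha1) hs2 < expay u1 (pure R a1') hs2 /\
        best_resp2 u2 (pure R ha1) hs2).

Hypothesis unique_reply :
  ~ (exists (a1 : A1) (a2 a2' : A2), a2 <> a2' /\
        best_resp2 u2 (pure R a1) (pure R a2) /\
        best_resp2 u2 (pure R a1) (pure R a2')).

Lemma Iset_nash i j : Iset u2 i j -> nash u1 u2 (pure R i) (pure R j).
Proof.
move=> Iij; have br2 : best_resp2 u2 (pure R i) (pure R j) by apply/best_resp2_pure.
do 2 (split; first exact: mixed_pure); split => //.
apply: best_resp1_pure => a; rewrite leNgt; apply/negP => gain.
by apply: no_deviation; exists i, (pure R j), a.
Qed.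

Lemma Iset_functional i j j' : Iset u2 i j -> Iset u2 i j' -> j = j'.
Proof.
move=> Ij Ij'; case: (eqVneq j j') => // ne; exfalso.
by apply: unique_reply; exists i, j, j'; split; [exact/eqP | split; apply/best_resp2_pure].
Qed.

Variables (a2 : A2) (v : R).

Hypothesis value2 : forall s1 s2, nash u1 u2 s1 s2 -> expay u2 s1 s2 = v.

Lemma Iset_value i j : Iset u2 i j -> u2 i j = v.
Proof. by move=> Iij; rewrite -(expay_pure u2 i j); apply/value2/Iset_nash. Qed.

Lemma u2_le_value i j : u2 i j <= v.
Proof. by have [j' Ij'] := Iset_exists u2 a2 i; rewrite -(Iset_value Ij'). Qed.

(* Every equilibrium has the player-1 payoff of some profile in I: its
   support lies in I, so player 2's strategy is pure. *)
Lemma nash_payoff_in_Iset s1 s2 : nash u1 u2 s1 s2 ->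
  exists i j, Iset u2 i j /\ expay u1 s1 s2 = u1 i j.
Proof.
move=> N; have [ms1 [ms2 [br1 _]]] := N.
have supp_I i j : 0 < s1 i -> 0 < s2 j -> Iset u2 i j.
  move=> p1 p2 j'; rewrite (avg_at_max_support ms1 ms2 u2_le_value (value2 N) p1 p2).
  exact: u2_le_value.
have [i0 p0] := mixed_support ms1; have [j0 I0] := Iset_exists u2 a2 i0.
have s2_pure : s2 = pure R j0.
  by apply: mixed_single_support => // j pj; exact: Iset_functional (supp_I _ _ p0 pj) I0.
subst s2; exists i0, j0; split => //.
have [_ [_ [[_ br_i0] _]]] := Iset_nash I0.
apply: le_anti; rewrite -{1}(expay_pure u1 i0 j0) br_i0 //=.
by rewrite -(expay_pure u1 i0 j0); apply: br1.2; exact: mixed_pure.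
Qed.

End Game.

Theorem mainTheorem3 (R : realFieldType) (A1 A2 : finType)
  (a1_0 : A1) (a2_0 : A2) (u1 u2 : A1 -> A2 -> R) :
  (* (1) |V_1| > 1 *)
  (exists s1 s2 t1 t2, nash u1 u2 s1 s2 /\ nash u1 u2 t1 t2 /\
      expay u1 s1 s2 <> expay u1 t1 t2) ->
  (* (1) |V_2| = 1 *)
  (exists v : R, (exists s1 s2, nash u1 u2 s1 s2 /\ expay u2 s1 s2 = v) /\
      forall s1 s2, nash u1 u2 s1 s2 -> expay u2 s1 s2 = v) ->
  (* (2) *)
  ~ (exists (ha1 : A1) (hs2 : {ffun A2 -> R}) (a1' : A1),
        expay u1 (pure R ha1) hs2 < expay u1 (pure R a1') hs2 /\
        best_resp2 u2 (pure R ha1) hs2) ->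
  (* (3) *)
  ~ (exists (a1 : A1) (a2 a2' : A2), a2 <> a2' /\
        best_resp2 u2 (pure R a1) (pure R a2) /\
        best_resp2 u2 (pure R a1) (pure R a2')) ->
  (* (a) *)
  (forall i j, Iset u2 i j -> nash u1 u2 (pure R i) (pure R j)) /\
  (* (b) *)
  (forall i, exists! j, Iset u2 i j) /\
  (* (c) *)
  (exists b : R, (forall i j, Iset u2 i j -> u2 i j = b) /\
      (forall i' j', ~ Iset u2 i' j' -> u2 i' j' < b)) /\
  (* (d) *)
  (exists i j i' j', Iset u2 i j /\ Iset u2 i' j' /\
      u1 i j <> u1 i' j' /\ i <> i' /\ j <> j').
Proof.
move=> [s1 [s2 [t1 [t2 [Ns [Nt payoff_ne]]]]]] [v [_ value2]] H2 H3.
have functional := Iset_functional H3.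
split; first exact: Iset_nash.
split.
  move=> i; have [j Ij] := Iset_exists u2 a2_0 i.
  by exists j; split => // j'; exact: functional.
split.
  exists v; split; first exact: Iset_value value2.
  move=> i' j' notI; have [j Ij] := Iset_exists u2 a2_0 i'.
  rewrite -(Iset_value H2 value2 Ij) lt_neqAle (Ij j') andbT.
  by apply/eqP => e; apply: notI => j''; rewrite e; exact: Ij.
have [i [j [Iij e1]]] := nash_payoff_in_Iset H2 H3 a2_0 value2 Ns.
have [i' [j' [Iij' e2]]] := nash_payoff_in_Iset H2 H3 a2_0 value2 Nt.
have u1_ne : u1 i j <> u1 i' j' by rewrite -e1 -e2.
exists i, j, i', j'; do 3 (split => //); split.
  by move=> ei; subst i'; apply: u1_ne; rewrite (functional _ _ _ Iij Iij').
move=> ej; subst j'; apply: u1_ne.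
exact: nash_pure_same_column (Iset_nash H2 Iij) (Iset_nash H2 Iij').
Qed.
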